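(* Let $\omega\in[n]^*$, $i\in[n]$, and $x\in B^M_\omega:=M_\omega B_\omega$. Then (1) $x-M_\omega e_i\in B^M_\omega$ or $x-M_\omega e_i\le0$ (or both); and (2) $x+M_\omega e_i\in B^M_\omega$ or $x+M_\omega e_i\ge u_\omega$ (or both). Inequalities are coordinatewise.
   Context: Let $[n]=\{1,\dots,n\}$, $e_1,\dots,e_n$ the standard basis of $\mathbb{Z}^n$; $\varepsilon$ is the empty word, $*$ concatenation. For words $\omega$ over $[n]$ define recursively $\delta^i_\omega\in\mathbb{Z}^n$: $\delta^i_\varepsilon=e_i$; $\delta^j_{\omega*j}=\delta^j_\omega$, $\delta^i_{\omega*j}=\delta^i_\omega-\delta^j_\omega$ for $i\ne j$. Let $B_\varepsilon=\{0\}$, $B_{\omega*j}=B_\omega+\{0,\delta^j_\omega\}$ (Minkowski sum). Let $M_\omega=(\delta^1_\omega\ \cdots\ \delta^n_\omega)^{-1}$ (inverse of the matrix with columns $\delta^i_\omega$). For $k\in[n]$ let $D^k=\mathrm{id}+e_k(\mathbb{1}-e_k)^T$ with $\mathbb{1}=(1,\dots,1)^T$. Define $u_\varepsilon=0$, $u_{\omega*j}=e_j+D^j u_\omega$. *)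

(* Vectors of Z^n are represented as column vectors 'cV[rat]_n
   (integer-valued), so that the inverse M_omega can be taken with invmx. *)
From HB Require Import structures.
From mathcomp Require Import all_boot all_order all_algebra.
Set Implicit Arguments. Unset Strict Implicit. Unset Printing Implicit Defensive.
Import Order.TTheory GRing.Theory Num.Theory.
Local Open Scope ring_scope.

Section Defs.
Variable n : nat.

Definition evec (i : 'I_n) : 'cV[rat]_n := delta_mx i 0.

(* Words over [n] are sequences of 'I_n; w ++ [:: j] = omega * j.
   The recursions are on the last letter, implemented on the reversed word. *)
Fixpoint delta_rev (r : seq 'I_n) (i : 'I_n) : 'cV[rat]_n :=
  match r with
  | [::] => evec i
  | j :: r' => if i == j then delta_rev r' j else delta_rev r' i - delta_rev r' j
  end.
Definition delta (w : seq 'I_n) (i : 'I_n) : 'cV[rat]_n := delta_rev (rev w) i.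

(* B_omega as a finite list of points (Minkowski sum B + {0, d}) *)
Fixpoint B_rev (r : seq 'I_n) : seq 'cV[rat]_n :=
  match r with
  | [::] => [:: 0]
  | j :: r' => B_rev r' ++ [seq b + delta_rev r' j | b <- B_rev r']
  end.
Definition B (w : seq 'I_n) : seq 'cV[rat]_n := B_rev (rev w).

Definition deltamx (w : seq 'I_n) : 'M[rat]_n := \matrix_(a, i) delta w i a 0.
Definition M (w : seq 'I_n) : 'M[rat]_n := invmx (deltamx w).

Definition D (k : 'I_n) : 'M[rat]_n :=
  1%:M + evec k *m (const_mx 1 - evec k)^T.

Fixpoint u_rev (r : seq 'I_n) : 'cV[rat]_n :=
  match r with
  | [::] => 0
  | j :: r' => evec j + D j *m u_rev r'
  end.
Definition u (w : seq 'I_n) : 'cV[rat]_n := u_rev (rev w).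

Definition inBM (w : seq 'I_n) (x : 'cV[rat]_n) : Prop :=
  exists2 b, b \in B w & x = M w *m b.

Definition vle (x y : 'cV[rat]_n) : Prop := forall a : 'I_n, x a 0 <= y a 0.

End Defs.

From mathcomp Require Import all_boot all_order all_algebra.
From mathcomp Require Import lra zify.
Import Order.TTheory GRing.Theory Num.Theory.
Local Open Scope ring_scope.
Set Implicit Arguments. Unset Strict Implicit.

(* Everything is organised along the reversed word r = rev w, so
   that appending a letter j to w becomes consing j onto r.
   - D^j acts on a column y by replacing its j-th coordinate with the sum of
     all coordinates; in particular D^j e_j = e_j.
   - The product Dprod r = D^{j_k} ... D^{j_1} maps every delta^i_w to e_i,
     hence it is the inverse M_w of the matrix of the delta's.
   - Consequently B^M satisfies the recursion
       B^M_{w*j} = D^j B^M_w  u  D^j (B^M_w + e_j),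
     which reduces both claims to an induction on the word.
   - Claim (1) is that induction; its only non-formal step uses that points of
     B^M are integral, so a nonzero nonpositive y - M e_i has coordinate sum
     at most -1, which absorbs the added e_j.
   - B^M_w is symmetric under x |-> u_w - x, and this symmetry exchanges
     claim (2) with claim (1). *)

Section BoxRecursion.
Variable n : nat.
Implicit Types (r : seq 'I_n) (x y z : 'cV[rat]_n) (i j : 'I_n).

Lemma evecE i a (z : 'I_1) : evec i a z = (a == i)%:R.
Proof. by rewrite /evec mxE [z]ord1 eqxx andbT. Qed.

Definition csum y : rat := \sum_k y k 0.

Lemma csum_evec i : csum (evec i) = 1.
Proof.
rewrite /csum (bigD1 i) //= big1 ?addr0 ?evecE ?eqxx //.
by move=> k /negbTE ki; rewrite evecE ki.
Qed.

Lemma csumD y z : csum (y + z) = csum y + csum z.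
Proof. by rewrite /csum -big_split; apply: eq_bigr => k _; rewrite mxE. Qed.

Lemma csumB y z : csum (y - z) = csum y - csum z.
Proof. by rewrite /csum -sumrB; apply: eq_bigr => k _; rewrite !mxE. Qed.

Lemma D_coord j y a : (D j *m y) a 0 = if a == j then csum y else y a 0.
Proof.
rewrite /D mulmxDl mul1mx mxE -mulmxA mxE big_ord1 evecE.
case: eqP => [->|_]; last by rewrite mul0r addr0.
rewrite mul1r /csum [in RHS](bigD1 j) //=; congr (_ + _).
rewrite mxE (bigD1 j) //= !mxE !eqxx subrr mul0r add0r.
by apply: eq_bigr => k /negbTE kj; rewrite !mxE kj subr0 mul1r.
Qed.

Lemma D_evec j : D j *m evec j = evec j.
Proof. by apply/colP => a; rewrite D_coord csum_evec evecE; case: eqP. Qed.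

Fixpoint Dprod r : 'M[rat]_n := if r is j :: r' then D j *m Dprod r' else 1%:M.

Lemma Dprod_delta r i : Dprod r *m delta_rev r i = evec i.
Proof.
elim: r i => [|j r IH] i /=; first by rewrite mul1mx.
case: eqP => [->|/eqP ij]; first by rewrite -mulmxA IH D_evec.
rewrite -mulmxA mulmxBr !IH; apply/colP => a.
rewrite D_coord csumB !csum_evec subrr !mxE !eqxx !andbT.
by case: eqP => [->|_]; rewrite ?subr0 // eq_sym (negbTE ij).
Qed.

Lemma M_Dprod (w : seq 'I_n) : M w = Dprod (rev w).
Proof.
have left_inv : Dprod (rev w) *m deltamx w = 1%:M.
  apply/matrixP => a b.
  have -> : (Dprod (rev w) *m deltamx w) a b = (Dprod (rev w) *m delta w b) a 0.
    by rewrite !mxE; apply: eq_bigr => k _; rewrite mxE.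
  by rewrite /delta Dprod_delta !mxE eqxx andbT.
have [_ unit_delta] := mulmx1_unit left_inv.
by rewrite /M -[RHS]mulmx1 -(mulmxV unit_delta) mulmxA left_inv mul1mx.
Qed.

Definition BMr r x : Prop := exists2 b, b \in B_rev r & x = Dprod r *m b.

Lemma inBM_BMr (w : seq 'I_n) x : inBM w x <-> BMr (rev w) x.
Proof. by rewrite /inBM M_Dprod. Qed.

Lemma BMr0 r : BMr r 0.
Proof.
exists 0; last by rewrite mulmx0.
by elim: r => [|j r IH] //=; rewrite ?inE // mem_cat IH.
Qed.

Lemma BMr_nil x : BMr [::] x -> x = 0.
Proof. by case=> b; rewrite inE => /eqP -> ->; rewrite mulmx0. Qed.

Lemma BMr_consP j r x : BMr (j :: r) x ->
  exists2 y, BMr r y & (x = D j *m y \/ x = D j *m (y + evec j)).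
Proof.
case=> b /=; rewrite mem_cat => /orP [Hb|/mapP [b0 Hb0 ->]] ->.
  by exists (Dprod r *m b); [exists b|left; rewrite mulmxA].
exists (Dprod r *m b0); [by exists b0|right].
by rewrite -mulmxA mulmxDr Dprod_delta.
Qed.

Lemma BMr_cons j r y : BMr r y -> BMr (j :: r) (D j *m y).
Proof.
by case=> b Hb ->; exists b; rewrite /= ?mem_cat ?Hb ?mulmxA.
Qed.

Lemma BMr_cons_shift j r y : BMr r y -> BMr (j :: r) (D j *m (y + evec j)).
Proof.
case=> b Hb ->; exists (b + delta_rev r j).
  by rewrite /= mem_cat; apply/orP; right; apply/mapP; exists b.
by rewrite /= -[in RHS]mulmxA [in RHS]mulmxDr Dprod_delta.
Qed.

Definition intv x : Prop := forall a, x a 0 \is a Num.int.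

Lemma intv_D j y : intv y -> intv (D j *m y).
Proof.
by move=> Hy a; rewrite D_coord; case: ifP => // _; apply: rpred_sum => k _.
Qed.

Lemma intv_evec i : intv (evec i).
Proof. by move=> a; rewrite evecE natr_int. Qed.

Lemma intvB x y : intv x -> intv y -> intv (x - y).
Proof. by move=> Hx Hy a; rewrite !mxE rpredB. Qed.

Lemma intv_BMr r x : BMr r x -> intv x.
Proof.
elim: r x => [|j r IH] x; first by move/BMr_nil => -> a; rewrite mxE rpred0.
case/BMr_consP => y /IH Hy [->|->]; apply: intv_D => //.
by move=> a; rewrite mxE rpredD ?intv_evec.
Qed.

Lemma intv_Dprod_evec r i : intv (Dprod r *m evec i).
Proof.
elim: r => [|j r IH] /=; first by rewrite mul1mx; apply: intv_evec.
by rewrite -mulmxA; apply: intv_D.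
Qed.

Lemma vle_D0 j z : vle z 0 -> vle (D j *m z) 0.
Proof.
move=> Hz a; rewrite D_coord mxE; case: ifP => _; last by have := Hz a; rewrite mxE.
by apply: sumr_le0 => k _; have := Hz k; rewrite mxE.
Qed.

Lemma csum_le_m1 z : vle z 0 -> intv z -> z != 0 -> csum z <= -1.
Proof.
move=> Hz Iz nz.
have zle0 k : z k 0 <= 0 by have := Hz k; rewrite mxE.
have [k nzk] : exists k, z k 0 != 0.
  apply/existsP; apply: contraR nz; rewrite negb_exists => /forallP H.
  by apply/eqP/colP => k; rewrite mxE; apply/eqP; have := H k; rewrite negbK.
have zk_le : z k 0 <= -1.
  have /intrP [m Hm] := Iz k.
  have : z k 0 < 0 by rewrite lt_neqAle nzk zle0.
  rewrite Hm ltrz0 => mneg.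
  have m_le : m <= -1 by lia.
  by rewrite -(ler_int rat) intrN in m_le.
apply: le_trans zk_le.
by rewrite /csum (bigD1 k) //= gerDl; apply: sumr_le0 => l _.
Qed.

Lemma vle_D_shift j z :
  vle z 0 -> intv z -> z != 0 -> vle (D j *m (z + evec j)) 0.
Proof.
move=> Hz Iz nz a; rewrite D_coord [X in _ <= X]mxE.
case: ifP => [_|/negbT aj].
  by rewrite csumD csum_evec; have := csum_le_m1 Hz Iz nz; lra.
by rewrite mxE evecE (negbTE aj) addr0; have := Hz a; rewrite mxE.
Qed.

Lemma BMr_step_down r x i : BMr r x ->
  BMr r (x - Dprod r *m evec i) \/ vle (x - Dprod r *m evec i) 0.
Proof.
elim: r x => [|j r IH] x.
  move/BMr_nil => ->; right => a; rewrite mul1mx !mxE.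
  by rewrite sub0r oppr_le0 ler0n.
case/BMr_consP => y By Hx /=; rewrite -mulmxA.
set v := Dprod r *m evec i.
case: Hx => ->; rewrite -mulmxBr.
  by case: (IH y By) => H; [left; apply: BMr_cons|right; apply: vle_D0].
rewrite addrAC; have [->|nz] := eqVneq (y - v) 0.
  by left; apply/BMr_cons_shift/BMr0.
case: (IH y By) => H; first by left; apply: BMr_cons_shift.
right; apply: vle_D_shift => //.
by apply: intvB; [exact: intv_BMr By | exact: intv_Dprod_evec].
Qed.

(* The affine identity behind the reflection symmetry of B^M. *)
Lemma D_reflect j p q :
  evec j + D j *m p - D j *m q = D j *m (p - q + evec j).
Proof. by rewrite !mulmxDr mulmxN D_evec [RHS]addrC addrA. Qed.

Lemma BMr_reflect r x : BMr r x -> BMr r (u_rev r - x).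
Proof.
elim: r x => [|j r IH] x; first by move/BMr_nil => ->; rewrite subr0; apply: BMr0.
case/BMr_consP => y /IH By [->|->] /=; rewrite D_reflect.
  exact: BMr_cons_shift.
by rewrite opprD addrA subrK; apply: BMr_cons.
Qed.

(* Claim (2) along reversed words: reflect, step down, reflect back. *)
Lemma BMr_step_up r x i : BMr r x ->
  BMr r (x + Dprod r *m evec i) \/ vle (u_rev r) (x + Dprod r *m evec i).
Proof.
move=> Bx; case: (BMr_step_down i (BMr_reflect Bx)) => [/BMr_reflect|Hle].
  by rewrite -addrA -opprD opprB addrC subrK; left.
by right => a; have := Hle a; rewrite !mxE; lra.
Qed.

End BoxRecursion.

Theorem lemma3p4 (n : nat) (w : seq 'I_n) (i : 'I_n) (x : 'cV[rat]_n) :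
  inBM w x ->
  (inBM w (x - M w *m evec i) \/ vle (x - M w *m evec i) 0) /\
  (inBM w (x + M w *m evec i) \/ vle (u w) (x + M w *m evec i)).
Proof.
rewrite !inBM_BMr /u M_Dprod => Bx.
by split; [apply: BMr_step_down | apply: BMr_step_up].
Qed.
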